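(* Consider $u_t+\beta u_x=g$ with constant $\beta>0$ and periodic boundary conditions, and an explicit $s$-stage Runge–Kutta method with coefficients $c_{\ell\kappa},d_{\ell\kappa}$ ($0\le\kappa\le\ell\le s-1$, $\sum_{\kappa}c_{\ell\kappa}=1$). Given $u_h^{n,0}=u_h^n\in\mathbb V^k$, time step $\tau$ and source functions $g^{n,\kappa}\in L^2(\Omega)$, the RKSV stages $u_h^{n,\ell+1}\in\mathbb V^k$ are defined by $$(u_h^{n,\ell+1},\omega^* )=\sum_{0\le\kappa\le\ell}\Big(c_{\ell\kappa}(u_h^{n,\kappa},\omega^* )+\tau d_{\ell\kappa}\Big(\sum_i\sum_{j=0}^k\omega^*_{i,j}\big(\hat f^{n,\kappa}_{i,j}-\hat f^{n,\kappa}_{i,j+1}\big)+(g^{n,\kappa},\omega^* )\Big)\Big)\quad\forall\omega^*\in\mathbb V^{k,*},$$ with upwind fluxes $\hat f^{n,\kappa}_{i,j}=\beta u_h^{n,\kappa}(x_{i,j})$ for $1\le j\le k$, $\hat f^{n,\kappa}_{i,0}=\beta u_h^{n,\kappa}(x_{i-\frac12}^-)$, $\hat f^{n,\kappa}_{i,k+1}=\beta u_h^{n,\kappa}(x_{i+\frac12}^-)$, and $u_h^{n+1}=u_h^{n,s}$. Under Assumption (S), these relations are equivalent to: for all $\omega\in\mathbb V^k$ and $\ell=0,\dots,s-1$, $$(u_h^{n,\ell+1},\omega)_*=\sum_{0\le\kappa\le\ell}\Big(c_{\ell\kappa}(u_h^{n,\kappa},\omega)_*+\tau d_{\ell\kappa}\big(\mathcal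 H^*(u_h^{n,\kappa},\omega)+(g^{n,\kappa},M^*\omega)\big)\Big).$$
   Context: Let $\Omega=[a,b]$ be partitioned into finitely many cells $I_i=[x_{i-\frac12},x_{i+\frac12}]$ with sizes $h_i$; indices are periodic (the point $x_{\frac12}$ is identified with the last interface). $(\cdot,\cdot)$ is the $L^2(\Omega)$ inner product, $(\cdot,\cdot)_{I_i}$ the $L^2(I_i)$ one. $\mathbb V^k=\{v\in L^2(\Omega): v|_{I_i}\in\mathbb P^k(I_i)\ \forall i\}$. Each $I_i$ has subdivision points $x_{i-\frac12}=x_{i,0}<x_{i,1}<\dots<x_{i,k}<x_{i,k+1}=x_{i+\frac12}$, control volumes $I_{i,j}=[x_{i,j},x_{i,j+1}]$, $j=0,\dots,k$; $\mathbb V^{k,*}$ is the space of functions constant on each $I_{i,j}$, $\omega^*_{i,j}$ the value of $\omega^*$ on $I_{i,j}$. On each $I_i$ a quadrature $Q_i^k(v)=\sum_{j=0}^{k+1}A_{i,j}v(x_{i,j})$ is given, error $R_i^k(v)=\int_{I_i}v\,dx-Q_i^k(v)$, exact on $\mathbb P^{k-1}(I_i)$; for piecewise functions, $Q_i^k$ uses the restriction to $I_i$ (endpoint values are limits from inside $I_i$). $M^*:\mathbb V^k\to\mathbb V^{k,*}$: for $v=\omega|_{I_i}$, $(M^*\omega)|_{I_{i,0}}=v(x_{i-\frac12})+A_{i,0}v'(x_{i-\frac12})$ and $(M^*\omega)|_{I_{i,j}}-(M^*\omega)|_{I_{i,j-1}}=A_{i,j}v'(x_{i,j})$, $j=1,\dots,k$.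 $L_{i,\ell}$ is the shifted Legendre polynomial of degree $\ell$ on $I_i$ with $L_{i,\ell}(x_{i+\frac12})=1$, $(L_{i,\ell},L_{i,m})_{I_i}=\delta_{\ell m}h_i/(2\ell+1)$. Assumption (S): $k\ge1$ and for every $i$, (1) $R_i^k(v)=0$ for all $v\in\mathbb P^{2k-1}(I_i)$, (2) $\frac{h_i}{2k-1}-Q_i^k(L_{i,k+1}L_{i,k-1})>0$; then $(v,\omega)_*:=(v,M^*\omega)$ is an inner product on $\mathbb V^k$. Jumps: $[\![v]\!]_{i+\frac12}=v(x_{i+\frac12}^+)-v(x_{i+\frac12}^-)$. For $\omega\in\mathbb V^k$ and piecewise smooth $v$: $\mathcal H^*(v,\omega)=\beta\Big(\sum_iQ_i^k(v\omega_x)+\sum_iv(x_{i+\frac12}^-)[\![\omega]\!]_{i+\frac12}-\sum_iA_{i,0}\,\omega_x(x_{i-\frac12}^+)[\![v]\!]_{i-\frac12}\Big)$. *)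

From HB Require Import structures.
From mathcomp Require Import all_boot all_order all_algebra.
From mathcomp Require Import all_classical all_reals all_analysis.
Set Implicit Arguments. Unset Strict Implicit. Unset Printing Implicit Defensive.
Import Order.TTheory GRing.Theory Num.Theory.
Import numFieldNormedType.Exports.
Local Open Scope classical_set_scope.
Local Open Scope ring_scope.

(* The mesh has N cells I_i, i = 0..N-1 (nat indices, periodic).
   xs i j = x_{i,j} for j = 0..k+1, with xs i 0 = x_{i-1/2}, xs i (k+1) = x_{i+1/2}.
   A piecewise function v in V^k is a family of polynomials v : nat -> {poly R},
   v i being the restriction of v to I_i (only i < N matters).
   A function of V^{k,*} is ws : nat -> nat -> R, ws i j = value on I_{i,j}
   (only i < N, j <= k matter). *)

Section Defs.
Variable R : realType.

Definition prevc (N i : nat) : nat := if i == 0%N then N.-1 else i.-1.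
Definition nextc (N i : nat) : nat := if i.+1 == N then 0%N else i.+1.

Definition integ (a b : R) (f : R -> R) : R :=
  \int[lebesgue_measure]_(x in `[a, b]) f x.

Definition mesh (N k : nat) (xs : nat -> nat -> R) : Prop :=
  (0 < N)%N /\
  (forall i j, (i < N)%N -> (j <= k)%N -> xs i j < xs i j.+1) /\
  (forall i, (i.+1 < N)%N -> xs i k.+1 = xs i.+1 0%N).

Definition a_of (xs : nat -> nat -> R) : R := xs 0%N 0%N.
Definition b_of (N k : nat) (xs : nat -> nat -> R) : R := xs N.-1 k.+1.
Definition hcell (k : nat) (xs : nat -> nat -> R) (i : nat) : R := xs i k.+1 - xs i 0%N.

Definition inVk (N k : nat) (v : nat -> {poly R}) : Prop :=
  forall i, (i < N)%N -> (size (v i) <= k.+1)%N.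

Definition Qi (k : nat) (xs A : nat -> nat -> R) (i : nat) (p : {poly R}) : R :=
  \sum_(j < k.+2) A i j * p.[xs i j].

Definition pairStar (N k : nat) (xs : nat -> nat -> R) (f : nat -> R -> R)
  (ws : nat -> nat -> R) : R :=
  \sum_(i < N) \sum_(j < k.+1) ws i j * integ (xs i j) (xs i j.+1) (f i).

Definition l2Vk (N k : nat) (xs : nat -> nat -> R) (v : nat -> {poly R})
  (ws : nat -> nat -> R) : R :=
  pairStar N k xs (fun i x => (v i).[x]) ws.

Definition l2g (N k : nat) (xs : nat -> nat -> R) (g : R -> R)
  (ws : nat -> nat -> R) : R :=
  pairStar N k xs (fun _ x => g x) ws.

Fixpoint Mstar_cell (k : nat) (xs A : nat -> nat -> R) (w : nat -> {poly R})
  (i j : nat) : R :=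
  match j with
  | 0%N => (w i).[xs i 0%N] + A i 0%N * (w i)^`().[xs i 0%N]
  | j'.+1 => Mstar_cell k xs A w i j' + A i j * (w i)^`().[xs i j]
  end.
Definition Mstar (k : nat) (xs A : nat -> nat -> R) (w : nat -> {poly R}) :
  nat -> nat -> R := fun i j => Mstar_cell k xs A w i j.

Definition ipStar (N k : nat) (xs A : nat -> nat -> R) (v w : nat -> {poly R}) : R :=
  l2Vk N k xs v (Mstar k xs A w).

(* v(x_{i-1/2}^-) : right end of the (periodic) left neighbour *)
Definition vleft (N k : nat) (xs : nat -> nat -> R) (v : nat -> {poly R}) (i : nat) : R :=
  (v (prevc N i)).[xs (prevc N i) k.+1].
Definition jump_right (N k : nat) (xs : nat -> nat -> R) (v : nat -> {poly R}) (i : nat) : R :=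
  (v (nextc N i)).[xs (nextc N i) 0%N] - (v i).[xs i k.+1].
Definition jump_left (N k : nat) (xs : nat -> nat -> R) (v : nat -> {poly R}) (i : nat) : R :=
  (v i).[xs i 0%N] - vleft N k xs v i.

Definition Hstar (N k : nat) (beta : R) (xs A : nat -> nat -> R)
  (v w : nat -> {poly R}) : R :=
  beta * (\sum_(i < N) Qi k xs A i (v i * (w i)^`())
          + \sum_(i < N) (v i).[xs i k.+1] * jump_right N k xs w i
          - \sum_(i < N) A i 0%N * (w i)^`().[xs i 0%N] * jump_left N k xs v i).

Definition fhat (N k : nat) (beta : R) (xs : nat -> nat -> R) (u : nat -> {poly R})
  (i j : nat) : R :=
  if j == 0%N then beta * vleft N k xs u i else beta * (u i).[xs i j].

Definition flux_term (N k : nat) (beta : R) (xs : nat -> nat -> R)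
  (u : nat -> {poly R}) (ws : nat -> nat -> R) : R :=
  \sum_(i < N) \sum_(j < k.+1) ws i j * (fhat N k beta xs u i j - fhat N k beta xs u i j.+1).

(* Legendre polynomials on [-1,1] (P_n(1) = 1), by the Bonnet recurrence *)
Fixpoint legendre2 (n : nat) : {poly R} * {poly R} :=
  (* returns (P_n, P_{n+1}) *)
  match n with
  | 0%N => (1, 'X)
  | n'.+1 => let (p0, p1) := legendre2 n' in
             (p1, ((n'.+1)%:R + 1)^-1 *:
                    ((2 * (n'.+1)%:R + 1) *: ('X * p1) - (n'.+1)%:R *: p0))
  end.
Definition legendre (n : nat) : {poly R} := (legendre2 n).1.

Definition Lshift (k : nat) (xs : nat -> nat -> R) (i n : nat) : {poly R} :=
  legendre n \Po ((2 / hcell k xs i) *: 'X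
                  - ((xs i 0%N + xs i k.+1) / hcell k xs i)%:P).

Definition assumptionS (N k : nat) (xs A : nat -> nat -> R) : Prop :=
  (1 <= k)%N /\
  forall i, (i < N)%N ->
    (forall p : {poly R}, (size p <= 2 * k)%N ->
        integ (xs i 0%N) (xs i k.+1) (fun x => p.[x]) - Qi k xs A i p = 0) /\
    hcell k xs i / (2 * k.-1 + 1)%:R
      - Qi k xs A i (Lshift k xs i k.+1 * Lshift k xs i k.-1) > 0.

Definition inL2 (a b : R) (g : R -> R) : Prop :=
  measurable_fun `[a, b] g /\
  lebesgue_measure.-integrable `[a, b] (fun x => ((g x) ^+ 2)%:E).

End Defs.

(* Testing the scheme with ω* = M*ω turns the flux sum into H*(·, ω): on each cell this is a
   summation by parts in which the last control-volume value of M*ω equals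
   ω(x_{i+1/2}) - A_{i,k+1} ω'(x_{i+1/2}) because the quadrature integrates ω' exactly, and
   the interface terms telescope by periodicity.  This gives one implication; the other
   follows once M* maps V^k onto V^{k,*}, i.e. is injective on each cell.
   If M*w = 0 on a cell, integrating w'q by parts, q the antiderivative of w vanishing at
   x_{i+1/2}, gives (k+1) ∫ w² + k E(w²) = 0, where the quadrature error E = ∫ - Q vanishes
   on P^{2k-1} and hence only sees the coefficient of degree 2k.  In the shifted Legendre
   basis the left side is a sum of squares with weights h/(2m+1) for m < k and, for L_k, a
   positive multiple of h/(2k-1) - Q(L_{k+1} L_{k-1}) (by the three-term recurrence), which
   is positive by Assumption (S). *)

From HB Require Import structures.
From mathcomp Require Import all_boot all_order all_algebra.
From mathcomp Require Import all_classical all_reals all_analysis.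
From mathcomp Require Import ring lra zify.
Import Order.TTheory GRing.Theory Num.Theory numFieldNormedType.Exports.
Local Open Scope ring_scope.
Set Implicit Arguments. Unset Strict Implicit. Unset Printing Implicit Defensive.

Section PolyIntegral.
Variable R : realType.
Implicit Types (a b c : R) (p q : {poly R}).

Definition antideriv p : {poly R} :=
  \poly_(i < (size p).+1) (if i is j.+1 then p`_j / j.+1%:R else 0).

Lemma coef_antideriv p i :
  (antideriv p)`_i = if i is j.+1 then p`_j / j.+1%:R else 0.
Proof.
rewrite coef_poly; case: ltnP => // hi; case: i hi => // j hj.
by rewrite nth_default ?mul0r.
Qed.

Lemma antiderivK : cancel antideriv (@deriv R).
Proof.
move=> p; apply/polyP => i; rewrite coef_deriv coef_antideriv /=.
by rewrite -[_ *+ i.+1]mulr_natr divfK // pnatr_eq0.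
Qed.

Lemma antideriv_deriv p : antideriv p^`() = p - (p`_0)%:P.
Proof.
apply/polyP => -[|i]; rewrite coef_antideriv coefB coefC; first by rewrite subrr.
by rewrite coef_deriv -[p`_i.+1 *+ _]mulr_natr mulfK ?pnatr_eq0 //= subr0.
Qed.

Lemma antideriv_is_linear : linear antideriv.
Proof.
move=> c p q; apply/polyP => -[|i].
  by rewrite coefD coefZ !coef_antideriv mulr0 addr0.
by rewrite coefD coefZ !coef_antideriv coefD coefZ mulrDl mulrA.
Qed.

HB.instance Definition _ :=
  GRing.isLinear.Build R {poly R} {poly R} *:%R antideriv antideriv_is_linear.

Definition pinteg a b p := (antideriv p).[b] - (antideriv p).[a].

Fact pinteg_is_semilinear a b : semilinear_for *%R (pinteg a b).
Proof.
by split=> [c p|p q]; rewrite /pinteg (linearZ, linearD) !hornerE /=; ring.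
Qed.

HB.instance Definition _ a b :=
  GRing.isSemilinear.Build R {poly R} R *%R (pinteg a b) (pinteg_is_semilinear a b).

Lemma pinteg_mulC a b c p : pinteg a b (c%:P * p) = c * pinteg a b p.
Proof. by rewrite mul_polyC linearZ. Qed.

Lemma pinteg_deriv a b p : pinteg a b p^`() = p.[b] - p.[a].
Proof. by rewrite /pinteg antideriv_deriv !hornerE; ring. Qed.

Lemma pinteg_by_parts a b p q :
  pinteg a b (p^`() * q) = p.[b] * q.[b] - p.[a] * q.[a] - pinteg a b (p * q^`()).
Proof.
have -> : p^`() * q = (p * q)^`() - p * q^`() by rewrite derivM; ring.
by rewrite linearB /= pinteg_deriv !hornerM.
Qed.

Lemma integ_poly a b p : a < b -> integ a b (fun x => p.[x]) = pinteg a b p.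
Proof.
move=> ab; rewrite /integ /Rintegral /pinteg -[p in LHS]antiderivK.
set F := antideriv p.
rewrite (@continuous_FTC2 R (fun x => F^`().[x]) (horner F) a b ab) //.
- exact/continuous_subspaceT/continuous_horner.
- split.
  + by move=> x _; exact: derivable_horner.
  + by apply: cvg_at_right_filter; exact: continuous_horner.
  + by apply: cvg_at_left_filter; exact: continuous_horner.
- by move=> x _; rewrite -derivE.
Qed.

End PolyIntegral.

Lemma coefM_top (R : nzRingType) (p q : {poly R}) m n :
  (size p <= m.+1)%N -> (size q <= n.+1)%N -> (p * q)`_(m + n) = p`_m * q`_n.
Proof.
move=> /leq_sizeP sp /leq_sizeP sq.
have hm : (m < (m + n).+1)%N by rewrite ltnS leq_addr.
rewrite coefM (bigD1 (Ordinal hm)) //= addKn big1 ?addr0 // => -[j hj] /= jm.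
have {}jm : j != m by apply: contra jm => /eqP e; apply/eqP/val_inj.
case: (ltngtP j m) jm => // h _; last by rewrite sp ?mul0r.
by rewrite sq ?mulr0 //; lia.
Qed.

Lemma size_deriv_leq (R : nzRingType) (p : {poly R}) n :
  (size p <= n.+1)%N -> (size p^`() <= n)%N.
Proof.
by move=> sp; apply/leq_sizeP => j jn; rewrite coef_deriv (leq_sizeP _ _ sp) ?mul0rn.
Qed.

Lemma scalar_coef_top (R : comNzRingType) (F : {linear {poly R} -> R | *%R}) n
    (q : {poly R}) :
  (forall p : {poly R}, (size p <= n)%N -> F p = 0) ->
  (size q <= n.+1)%N -> F q = q`_n * F 'X^n.
Proof.
move=> F0 sq; rewrite {1}(_ : q = q - q`_n *: 'X^n + q`_n *: 'X^n); last by rewrite subrK.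
rewrite linearD [F (q - _)]F0 ?add0r; first exact: linearZ.
apply/leq_sizeP => j; rewrite coefB coefZ coefXn leq_eqVlt => /orP[/eqP<-|nj].
  by rewrite eqxx mulr1 subrr.
by rewrite (leq_sizeP _ _ sq j) // (gtn_eqF nj) mulr0 subr0.
Qed.

Lemma weighted_sum_sq_eq0 (R : realDomainType) n (al c : nat -> R) :
  (forall m, (m < n)%N -> 0 < c m) -> \sum_(m < n) al m ^+ 2 * c m = 0 ->
  forall m, (m < n)%N -> al m = 0.
Proof.
move=> c_gt0 /psumr_eq0P al0 m mn.
have al0_ge0 (j : 'I_n) : true -> 0 <= al j ^+ 2 * c j.
  by move=> _; rewrite mulr_ge0 ?sqr_ge0 // ltW ?c_gt0.
have /eqP := al0 al0_ge0 (Ordinal mn) isT.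
by rewrite mulf_eq0 (gt_eqF (c_gt0 m mn)) orbF expf_eq0 => /eqP.
Qed.

Section Legendre.
Variable R : realType.
Local Notation P := (legendre R).
Local Notation J := (pinteg (-1 : R) 1).

Lemma legendre0 : P 0 = 1. Proof. by []. Qed.
Lemma legendre1 : P 1 = 'X. Proof. by []. Qed.

(* At n = 0 the last term vanishes, whatever P n.-1 is. *)
Lemma legendre_rec n :
  n.+1%:R%:P * P n.+1 = (2 * n + 1)%:R%:P * ('X * P n) - n%:R%:P * P n.-1.
Proof.
case: n => [|n]; first by rewrite legendre0 legendre1; ring.
have -> : P n.+2 = (n.+1%:R + 1)^-1 *:
    ((2 * n.+1%:R + 1) *: ('X * P n.+1) - n.+1%:R *: P n).
  by rewrite /legendre /=; case: (legendre2 R n).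
rewrite mul_polyC scalerA natr1 mulfV ?pnatr_eq0 // scale1r -!mul_polyC; ring.
Qed.

Lemma size_legendre n : size (P n) = n.+1.
Proof.
suff [] : size (P n) = n.+1 /\ size (P n.+1) = n.+2 by [].
elim: n => [|n [sn sn1]].
  by rewrite legendre0 legendre1 size_polyC oner_neq0 size_polyX.
split=> //; have := congr1 (fun p : {poly R} => size p) (legendre_rec n.+1).
have sX : size ('X * P n.+1) = n.+3.
  by rewrite mulrC size_mulX ?sn1 // -size_poly_eq0 sn1.
rewrite size_Cmul ?pnatr_eq0 // => ->.
rewrite size_polyDl size_Cmul ?pnatr_eq0 // sX // size_polyN size_Cmul ?pnatr_eq0 // sn; lia.
Qed.

Lemma legendre_rec_deriv n : n.+1%:R%:P * (P n.+1)^`() =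
  (2 * n + 1)%:R%:P * (P n + 'X * (P n)^`()) - n%:R%:P * (P n.-1)^`().
Proof.
have := congr1 deriv (legendre_rec n).
by rewrite !derivB !derivM !derivC derivX !mul0r !add0r mul1r.
Qed.

Lemma legendre_deriv_succ_of_derivX n :
  'X * (P n)^`() = (P n.-1)^`() + n%:R%:P * P n ->
  (P n.+1)^`() = (2 * n + 1)%:R%:P * P n + (P n.-1)^`().
Proof.
move=> eX; apply: (@mulfI _ n.+1%:R%:P); first by rewrite polyC_eq0 pnatr_eq0.
by rewrite legendre_rec_deriv eX; ring.
Qed.

Lemma legendre_derivX n : 'X * (P n)^`() = (P n.-1)^`() + n%:R%:P * P n.
Proof.
suff [] : 'X * (P n)^`() = (P n.-1)^`() + n%:R%:P * P n /\
  'X * (P n.+1)^`() = (P n)^`() + n.+1%:R%:P * P n.+1 by [].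
elim: n => [|n [eXn eXn1]].
  by rewrite legendre0 legendre1 derivX -polyC1 derivC; split; ring.
split=> //=.
rewrite (legendre_deriv_succ_of_derivX eXn1) mulrDr mulrCA eXn.
rewrite (legendre_deriv_succ_of_derivX eXn) [n.+2%:R%:P * _]legendre_rec /=; ring.
Qed.

Lemma legendre_deriv_mulX n : (P n.+1)^`() = 'X * (P n)^`() + n.+1%:R%:P * P n.
Proof. by rewrite (legendre_deriv_succ_of_derivX (legendre_derivX n)) legendre_derivX; ring. Qed.

Lemma legendre_deriv_weighted n :
  (1 - 'X^2) * (P n.+1)^`() = n.+1%:R%:P * (P n - 'X * P n.+1).
Proof.
rewrite mulrBl mul1r expr2 -mulrA legendre_derivX legendre_deriv_mulX /=; ring.
Qed.

Lemma legendre_ode n : ((1 - 'X^2) * (P n)^`())^`() = - (n * n.+1)%:R%:P * P n.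
Proof.
case: n => [|n].
  by rewrite legendre0 -polyC1 derivC mulr0 derivC mul0n mulr0n polyC0 oppr0 mul0r.
rewrite legendre_deriv_weighted derivM derivC mul0r add0r derivB derivM derivX mul1r.
by rewrite (legendre_derivX n.+1) /=; ring.
Qed.

Lemma legendre_orthogonal m n : m != n -> J (P m * P n) = 0.
Proof.
move=> mn; set G := (1 - 'X^2) * (P m)^`() * P n - (1 - 'X^2) * (P n)^`() * P m.
have dG : G^`() = ((n * n.+1)%:R - (m * m.+1)%:R)%:P * (P m * P n).
  by rewrite /G derivB !(derivM ((1 - 'X^2) * _)) !legendre_ode; ring.
have := pinteg_deriv (-1) 1 G; rewrite dG pinteg_mulC.
have -> : G.[1] - G.[-1] = 0 by rewrite /G !hornerE; ring.
move/eqP; rewrite mulf_eq0 subr_eq0 eqr_nat => /orP[/eqP e|/eqP //].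
have : (m * m.+1 != n * n.+1)%N.
  rewrite neq_ltn; case: (ltngtP m n) mn => // h _.
    by rewrite (ltn_mul h (h : (m.+1 < n.+1)%N)).
  by rewrite (ltn_mul h (h : (n.+1 < m.+1)%N)) orbT.
by rewrite e eqxx.
Qed.

Lemma legendre_norm n : J (P n * P n) = 2 / (2 * n + 1)%:R.
Proof.
have n21 m : (2 * m + 1)%:R != 0 :> R by rewrite pnatr_eq0 addn1.
apply: (mulfI (n21 n)); rewrite [RHS]mulrCA mulfV // mulr1.
elim: n => [|n IH]; first by rewrite legendre0 mulr1 -derivX pinteg_deriv !hornerX mul1r opprK.
set t := J ('X * (P n * P n.+1)).
have e1 : n.+1%:R * J (P n.+1 * P n.+1) = (2 * n + 1)%:R * t.
  have := congr1 (fun p => J (p * P n.+1)) (legendre_rec n).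
  rewrite /= -mulrA pinteg_mulC => ->; rewrite mulrBl linearB /= -!mulrA !pinteg_mulC.
  by rewrite legendre_orthogonal ?mulr0 ?subr0 //; lia.
have e2 : (2 * n + 3)%:R * t = n.+1%:R * J (P n * P n).
  have := congr1 (fun p => J (p * P n)) (legendre_rec n.+1).
  rewrite /= -mulrA pinteg_mulC legendre_orthogonal ?gtn_eqF // mulr0.
  rewrite mulrBl linearB /= -!mulrA !pinteg_mulC /t (mulrC (P n.+1)) => /eqP.
  by rewrite eq_sym subr_eq0 (_ : (2 * n.+1 + 1 = 2 * n + 3)%N) ?addnS ?mulnS //; move/eqP.
apply: (@mulfI _ n.+1%:R); first by rewrite pnatr_eq0.
rewrite mulrCA e1 mulrCA (_ : (2 * n.+1 + 1 = 2 * n + 3)%N) ?e2; last lia.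
by rewrite mulrCA IH mulrC.
Qed.

End Legendre.

Section LegendreOn.
Variables (R : realType) (a b : R).
Hypothesis ab : a < b.
Local Notation P := (legendre R).

Definition ref_map : {poly R} := (2 / (b - a)) *: 'X - ((a + b) / (b - a))%:P.
Definition legendre_on n := P n \Po ref_map.
Local Notation L := legendre_on.

Let ba_neq0 : b - a != 0. Proof. by rewrite subr_eq0 gt_eqF. Qed.

Lemma ref_map_left : ref_map.[a] = -1.
Proof. by rewrite /ref_map !hornerE; field. Qed.

Lemma ref_map_right : ref_map.[b] = 1.
Proof. by rewrite /ref_map !hornerE; field. Qed.

Lemma ref_map_deriv : ref_map^`() = (2 / (b - a))%:P.
Proof. by rewrite /ref_map derivB derivZ derivX derivC subr0 -mul_polyC mulr1. Qed.

Lemma size_ref_map : size ref_map = 2.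
Proof.
rewrite /ref_map size_polyDl size_scale ?size_polyX ?mulf_neq0 ?invr_eq0 //.
by rewrite size_polyN (leq_ltn_trans (size_polyC_leq1 _)).
Qed.

Lemma pinteg_comp_ref p : pinteg a b (p \Po ref_map) = (b - a) / 2 * pinteg (-1) 1 p.
Proof.
have -> : p \Po ref_map = ((b - a) / 2 *: (antideriv p \Po ref_map))^`().
  rewrite derivZ deriv_comp antiderivK ref_map_deriv -mul_polyC mulrCA -polyCM.
  have -> : (b - a) / 2 * (2 / (b - a)) = 1 by field.
  by rewrite polyC1 mulr1.
rewrite (pinteg_deriv a b ((b - a) / 2 *: _)) !hornerZ !horner_comp.
by rewrite ref_map_left ref_map_right /pinteg; ring.
Qed.

Lemma legendre_on_orthogonal m n : m != n -> pinteg a b (L m * L n) = 0.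
Proof. by move=> mn; rewrite -comp_polyM pinteg_comp_ref legendre_orthogonal // mulr0. Qed.

Lemma legendre_on_norm n : pinteg a b (L n * L n) = (b - a) / (2 * n + 1)%:R.
Proof.
rewrite -comp_polyM pinteg_comp_ref legendre_norm.
by field; rewrite -natrM natr1 pnatr_eq0.
Qed.

Lemma size_legendre_on n : size (L n) = n.+1.
Proof. by rewrite size_comp_poly2 ?size_ref_map // size_legendre. Qed.

Lemma legendre_on_rec n :
  n.+1%:R%:P * L n.+1 = (2 * n + 1)%:R%:P * (ref_map * L n) - n%:R%:P * L n.-1.
Proof.
have := congr1 (comp_poly ref_map) (legendre_rec R n).
by rewrite !comp_polyB !comp_polyM !comp_polyC comp_polyX.
Qed.

Lemma legendre_on_coef_neq0 n : (L n)`_n != 0.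
Proof.
have := size_legendre_on n; rewrite -[n in _`_n]/(n.+1.-1) => <-.
by rewrite -lead_coefE lead_coef_eq0 -size_poly_eq0 size_legendre_on.
Qed.

Lemma coef_legendre_on_gt n j : (n < j)%N -> (L n)`_j = 0.
Proof. by have /leq_sizeP := eq_leq (size_legendre_on n); apply. Qed.

Lemma legendre_on_expansion n (w : {poly R}) : (size w <= n.+1)%N ->
  exists al : nat -> R, w = \sum_(m < n.+1) al m *: L m.
Proof.
elim: n w => [|n IH] w sw.
  exists (fun=> w`_0); rewrite big_ord1 /L legendre0 -polyC1 comp_polyC -mul_polyC mulr1.
  exact: size1_polyC sw.
set c := w`_n.+1 / (L n.+1)`_n.+1.
have [|al eal] := IH (w - c *: L n.+1).
  apply/leq_sizeP => j; rewrite coefB coefZ leq_eqVlt => /orP[/eqP<-|nj].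
    by rewrite divfK ?legendre_on_coef_neq0 ?subrr.
  by rewrite (leq_sizeP _ _ sw) // coef_legendre_on_gt // mulr0 subr0.
exists (fun m => if m == n.+1 then c else al m).
rewrite big_ord_recr /= eqxx -[w](subrK (c *: L n.+1)) eal; congr (_ + _).
by apply: eq_bigr => m _; rewrite ltn_eqF.
Qed.

Lemma coef_legendre_on_sum n (al : nat -> R) :
  (\sum_(m < n.+1) al m *: L m)`_n = al n * (L n)`_n.
Proof.
rewrite coef_sum big_ord_recr /= big1 ?add0r ?coefZ // => m _.
by rewrite coefZ coef_legendre_on_gt ?mulr0.
Qed.

Lemma pinteg_legendre_on_sum_sq n (al : nat -> R) :
  pinteg a b ((\sum_(m < n) al m *: L m) * (\sum_(m < n) al m *: L m)) =
  \sum_(m < n) al m ^+ 2 * ((b - a) / (2 * m + 1)%:R).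
Proof.
rewrite mulr_suml linear_sum; apply: eq_bigr => m _.
rewrite mulr_sumr linear_sum (bigD1 m) //= big1 ?addr0 => [|j jm].
  by rewrite -scalerAl -scalerAr !linearZ /= legendre_on_norm mulrA expr2.
by rewrite -scalerAl -scalerAr !linearZ /= legendre_on_orthogonal ?mulr0 // eq_sym.
Qed.

Lemma legendre_on_scalar_rel (F : {linear {poly R} -> R | *%R}) K :
  (forall p : {poly R}, (size p <= 2 * K.+1)%N -> F p = 0) ->
  K.+2%:R * (2 * K + 1)%:R * F (L K.+2 * L K) =
  (2 * K + 3)%:R * K.+1%:R * F (L K.+1 * L K.+1).
Proof.
move=> F0; have FC c p : F (c%:P * p) = c * F p by rewrite mul_polyC linearZ.
have sL m n : (size (L m * L n)%R <= m + n + 1)%N.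
  by apply: leq_trans (size_polyMleq _ _) _; rewrite !size_legendre_on; lia.
set t := F (ref_map * (L K.+1 * L K)).
have e1 : K.+2%:R * F (L K.+2 * L K) = (2 * K.+1 + 1)%:R * t.
  have := congr1 (fun p => F (p * L K)) (legendre_on_rec K.+1).
  rewrite /= -mulrA FC => ->; rewrite mulrBl linearB /= -!mulrA !FC.
  by rewrite [F (L K * _)]F0 ?mulr0 ?subr0 //; apply: leq_trans (sL _ _) _; lia.
have e2 : K.+1%:R * F (L K.+1 * L K.+1) = (2 * K + 1)%:R * t.
  have := congr1 (fun p => F (p * L K.+1)) (legendre_on_rec K).
  rewrite /= -mulrA FC => ->; rewrite mulrBl linearB /= -!mulrA !FC.
  rewrite [F (L K.-1 * _)]F0 ?mulr0 ?subr0; last by apply: leq_trans (sL _ _) _; lia.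
  by rewrite /t (mulrC (L K)).
transitivity ((2 * K + 1)%:R * (K.+2%:R * F (L K.+2 * L K))); first ring.
rewrite e1 -mulrA e2 (_ : (2 * K.+1 + 1 = 2 * K + 3)%N) 1?mulrCA //; lia.
Qed.

End LegendreOn.


Section CellOperators.
Variables (R : realType) (k : nat) (xs A : nat -> nat -> R) (i : nat).

Fact Qi_is_semilinear : semilinear_for *%R (Qi k xs A i).
Proof.
split=> [c p|p q]; rewrite /Qi.
  by rewrite mulr_sumr; apply: eq_bigr => j _; rewrite hornerZ mulrCA.
by rewrite -big_split; apply: eq_bigr => j _; rewrite hornerD mulrDr.
Qed.

HB.instance Definition _ :=
  GRing.isSemilinear.Build R {poly R} R *%R (Qi k xs A i) Qi_is_semilinear.

Definition quad_err (p : {poly R}) := pinteg (xs i 0%N) (xs i k.+1) p - Qi k xs A i p.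

Fact quad_err_is_semilinear : semilinear_for *%R quad_err.
Proof.
by split=> [c p|p q]; rewrite /quad_err (linearZ, linearD) /= (linearZ, linearD) /=; ring.
Qed.

HB.instance Definition _ :=
  GRing.isSemilinear.Build R {poly R} R *%R quad_err quad_err_is_semilinear.

Definition mstar_loc j (p : {poly R}) := Mstar_cell k xs A (fun=> p) i j.

Lemma Mstar_cell_loc (w : nat -> {poly R}) j : Mstar_cell k xs A w i j = mstar_loc j (w i).
Proof. by elim: j => [|j IH] //=; rewrite IH. Qed.

Lemma mstar_locS j p : mstar_loc j.+1 p = mstar_loc j p + A i j.+1 * p^`().[xs i j.+1].
Proof. by []. Qed.

Lemma mstar_locE j p :
  mstar_loc j p = p.[xs i 0%N] + \sum_(t < j.+1) A i t * p^`().[xs i t].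
Proof. by elim: j => [|j IH]; rewrite ?big_ord1 // big_ord_recr addrA -IH. Qed.

Fact mstar_loc_is_semilinear j : semilinear_for *%R (mstar_loc j).
Proof.
have mstar_locD p q : mstar_loc j (p + q) = mstar_loc j p + mstar_loc j q.
  rewrite !mstar_locE derivD hornerD addrACA -big_split; congr (_ + _).
  by apply: eq_bigr => t _; rewrite hornerD mulrDr.
split=> [c p|p q]; last exact: mstar_locD.
rewrite !mstar_locE derivZ hornerZ mulrDr mulr_sumr; congr (_ + _).
by apply: eq_bigr => t _; rewrite hornerZ mulrCA.
Qed.

HB.instance Definition _ j :=
  GRing.isSemilinear.Build R {poly R} R *%R (mstar_loc j) (mstar_loc_is_semilinear j).

End CellOperators.


Section Cell.
Variables (R : realType) (K : nat) (xs A : nat -> nat -> R) (i : nat).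
Local Notation k := K.+1.
Local Notation a := (xs i 0%N).
Local Notation b := (xs i k.+1).
Local Notation Q := (Qi k xs A i).
Local Notation E := (quad_err k xs A i).
Local Notation M j := (mstar_loc k xs A i j).
Local Notation L := (legendre_on a b).
Hypothesis ab : a < b.
Hypothesis quad_exact : forall p : {poly R}, (size p <= 2 * k)%N -> E p = 0.

Lemma quad_err_top (p : {poly R}) :
  (size p <= (2 * k).+1)%N -> E p = p`_(2 * k) * E 'X^(2 * k).
Proof. exact: scalar_coef_top. Qed.

Lemma quad_err_sq (p : {poly R}) :
  (size p <= k.+1)%N -> E (p * p) = p`_k ^+ 2 * E 'X^(2 * k).
Proof.
move=> sp; rewrite quad_err_top; last by apply: leq_trans (size_polyMleq _ _) _; lia.
by rewrite (_ : (2 * k = k + k)%N) ?coefM_top ?expr2 //; lia.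
Qed.

Lemma Qi_mstar_kernel (w q : {poly R}) :
  (forall j, (j <= k)%N -> M j w = 0) -> q.[b] = 0 ->
  Q (w^`() * q) = - (w.[a] * q.[a]).
Proof.
move=> w0 qb.
have A0 : A i 0%N * w^`().[a] = - w.[a].
  by apply/eqP; rewrite -addr_eq0 addrC; apply/eqP; exact: (w0 0%N isT).
have At t : (t < k)%N -> A i t.+1 * w^`().[xs i t.+1] = 0.
  by move=> tk; have := w0 t.+1 tk; rewrite mstar_locS w0 ?add0r // ltnW.
rewrite /Qi big_ord_recl big_ord_recr /= big1 => [|t _].
  by rewrite !hornerM qb !mulr0 !addr0 mulrA A0 mulNr.
by rewrite hornerM mulrA /bump /= add1n At ?mul0r.
Qed.

Lemma mstar_kernel_energy (w : {poly R}) : (size w <= k.+1)%N ->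
  (forall j, (j <= k)%N -> M j w = 0) ->
  k.+1%:R * pinteg a b (w * w) + k%:R * E (w * w) = 0.
Proof.
move=> sw w0; set q := antideriv w - ((antideriv w).[b])%:P.
have qb : q.[b] = 0 by rewrite /q !hornerE subrr.
have dq : q^`() = w by rewrite derivB derivC subr0 antiderivK.
have Ewq : E (w^`() * q) = - pinteg a b (w * w).
  by rewrite /quad_err pinteg_by_parts dq qb (Qi_mstar_kernel w0 qb); ring.
have sd : (size w^`() <= K.+1)%N := size_deriv_leq sw.
have sq : (size q <= k.+2)%N.
  apply/leq_sizeP => j hj; rewrite coefB coef_antideriv coefC.
  by case: j hj => // j hj; rewrite (leq_sizeP _ _ sw) ?mul0r ?subr0.
have c1 : (w^`() * q)`_(2 * k) = w`_k * w`_k * (k%:R / k.+1%:R).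
  rewrite (_ : (2 * k = K + k.+1)%N) ?coefM_top //; last lia.
  by rewrite coef_deriv coefB coef_antideriv coefC subr0; ring.
rewrite -[pinteg _ _ _]opprK -Ewq quad_err_top ?c1 ?quad_err_sq //.
  by field; rewrite -natrD pnatr_eq0.
by apply: leq_trans (size_polyMleq _ _) _; lia.
Qed.

Hypothesis legendre_cond : 0 < (b - a) / (2 * K + 1)%:R - Q (L K.+2 * L K).

Lemma cell_weight_gt0 :
  0 < (b - a) / (2 * k + 1)%:R + k%:R / k.+1%:R * E (L k * L k).
Proof.
rewrite (_ : (2 * k + 1 = 2 * K + 3)%N); last lia.
have cond : 0 < (b - a) / (2 * K + 1)%:R + E (L K.+2 * L K).
  have QL : Q (L K.+2 * L K) = - E (L K.+2 * L K).
    by rewrite /quad_err legendre_on_orthogonal ?sub0r ?opprK //; lia.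
  by move: legendre_cond; rewrite QL opprK.
have rel := legendre_on_scalar_rel ab quad_exact; rewrite /= in rel.
have eE : E (L K.+2 * L K) =
    (2 * K + 3)%:R * K.+1%:R * E (L k * L k) / (K.+2%:R * (2 * K + 1)%:R).
  by rewrite -rel [_ * E _]mulrC mulfK // mulf_neq0 ?pnatr_eq0 ?addn1.
have -> : (b - a) / (2 * K + 3)%:R + k%:R / k.+1%:R * E (L k * L k) =
    (2 * K + 1)%:R / (2 * K + 3)%:R * ((b - a) / (2 * K + 1)%:R + E (L K.+2 * L K)).
  by rewrite eE; field; apply/and3P; split; rewrite gt_eqF //; lra.
by rewrite mulr_gt0 // divr_gt0 // ltr0n addn1.
Qed.

Lemma cell_coercive (w : {poly R}) : (size w <= k.+1)%N ->
  k.+1%:R * pinteg a b (w * w) + k%:R * E (w * w) = 0 -> w = 0.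
Proof.
move=> sw h0; have [al eal] := legendre_on_expansion ab sw.
set B := (b - a) / (2 * k + 1)%:R + k%:R / k.+1%:R * E (L k * L k).
have Ew : E (w * w) = al k ^+ 2 * E (L k * L k).
  rewrite !quad_err_sq ?(size_legendre_on ab) // {1}eal (coef_legendre_on_sum ab).
  by ring.
have al0 : forall m, (m < k.+1)%N -> al m = 0.
  pose weight m := if (m < k)%N then (b - a) / (2 * m + 1)%:R else B.
  apply: (@weighted_sum_sq_eq0 _ _ _ weight).
    move=> m _; rewrite /weight; case: ifP => _; last exact: cell_weight_gt0.
    by rewrite divr_gt0 ?subr_gt0 // ltr0n addn1.
  apply: (@mulfI _ k.+1%:R); first by rewrite pnatr_eq0.
  rewrite mulr0 -[RHS]h0 Ew eal (pinteg_legendre_on_sum_sq ab).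
  rewrite [in LHS]big_ord_recr [in RHS]big_ord_recr /= /weight ltnn.
  rewrite (eq_bigr (fun m : 'I_k => al m ^+ 2 * ((b - a) / (2 * m + 1)%:R))).
    have K0 : 0 <= K%:R :> R := ler0n _ _.
    by rewrite /B; field; apply/andP; split; rewrite gt_eqF //; lra.
  by move=> m _; rewrite ltn_ord.
by rewrite eal big1 // => m _; rewrite al0 ?scale0r.
Qed.

Lemma mstar_loc_inj (w : {poly R}) : (size w <= k.+1)%N ->
  (forall j, (j <= k)%N -> M j w = 0) -> w = 0.
Proof. by move=> sw w0; apply: cell_coercive sw (mstar_kernel_energy sw w0). Qed.

End Cell.

Section MstarOnto.
Variables (R : realType) (k : nat) (xs A : nat -> nat -> R) (i : nat).
Local Notation M j := (mstar_loc k xs A i j).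

Definition mstar_mx : 'M[R]_k.+1 := \matrix_(m, j) M j 'X^m.
Definition poly_of_row (c : 'rV[R]_k.+1) : {poly R} := \poly_(m < k.+1) c 0 (inord m).
Definition mstar_preimage (ws : nat -> R) : {poly R} :=
  poly_of_row ((\row_(j < k.+1) ws j) *m invmx mstar_mx).

Lemma size_mstar_preimage ws : (size (mstar_preimage ws) <= k.+1)%N.
Proof. exact: size_poly. Qed.

Lemma mstar_poly_of_row c (j : 'I_k.+1) : M j (poly_of_row c) = (c *m mstar_mx) 0 j.
Proof.
rewrite mxE /poly_of_row poly_def linear_sum; apply: eq_bigr => m _.
by rewrite linearZ mxE inord_val.
Qed.

Hypothesis M_inj : forall w : {poly R},
  (size w <= k.+1)%N -> (forall j, (j <= k)%N -> M j w = 0) -> w = 0.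

Lemma mstar_mx_unit : mstar_mx \in unitmx.
Proof.
rewrite unitmxE unitfE; apply/negP => /det0P [c c_neq0 c0].
have /M_inj pc0 : (size (poly_of_row c) <= k.+1)%N by exact: size_poly.
have {pc0} pc0 : poly_of_row c = 0.
  by apply: pc0 => j jk; rewrite (mstar_poly_of_row c (@Ordinal k.+1 j jk)) c0 mxE.
move/negP: c_neq0; apply; apply/eqP/rowP => m.
have := congr1 (fun p : {poly R} => p`_m) pc0.
by rewrite /poly_of_row coef_poly ltn_ord coef0 !mxE inord_val.
Qed.

Lemma mstar_preimageK ws j : (j <= k)%N -> M j (mstar_preimage ws) = ws j.
Proof.
move=> jk; rewrite (mstar_poly_of_row _ (@Ordinal k.+1 j jk)) mulmxKV ?mstar_mx_unit //.
by rewrite mxE.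
Qed.

End MstarOnto.

Lemma sum_by_parts (R : comNzRingType) n (g f : nat -> R) :
  \sum_(j < n.+1) g j * (f j - f j.+1) =
  g 0%N * f 0%N - g n * f n.+1 + \sum_(j < n) (g j.+1 - g j) * f j.+1.
Proof.
elim: n => [|n IH]; first by rewrite big_ord1 big_ord0; ring.
by rewrite big_ord_recr /= IH [in RHS]big_ord_recr /=; ring.
Qed.

Lemma nextc_ltn N i : (i < N)%N -> (nextc N i < N)%N.
Proof. by rewrite /nextc; case: eqP => [_|ne] //; lia. Qed.

Lemma prevcK N i : (i < N)%N -> prevc N (nextc N i) = i.
Proof. by rewrite /nextc; case: eqP => [<-|_] _; rewrite /prevc. Qed.

Lemma sum_nextc (V : nmodType) N (f : nat -> V) :
  \sum_(i < N) f (nextc N i) = \sum_(i < N) f i.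
Proof.
pose nxt (i : 'I_N) := Ordinal (nextc_ltn (ltn_ord i)).
have nxt_inj : injective nxt.
  move=> i j /(congr1 val) /= e; apply: val_inj.
  by rewrite -[LHS](prevcK (ltn_ord i)) -[RHS](prevcK (ltn_ord j)) e.
by rewrite [RHS](reindex_inj nxt_inj).
Qed.

Section Flux.
Variables (R : realType) (N k : nat) (beta : R) (xs A : nat -> nat -> R).
Variables (v w : nat -> {poly R}).

Definition Hstar_cell i := Qi k xs A i (v i * (w i)^`())
  + (v i).[xs i k.+1] * jump_right N k xs w i
  - A i 0%N * (w i)^`().[xs i 0%N] * jump_left N k xs v i.

Definition interface_flux i := vleft N k xs v i * (w i).[xs i 0%N]
  - (v i).[xs i k.+1] * (w (nextc N i)).[xs (nextc N i) 0%N].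

Lemma Mstar_last i :
  pinteg (xs i 0%N) (xs i k.+1) (w i)^`() = Qi k xs A i (w i)^`() ->
  Mstar k xs A w i k = (w i).[xs i k.+1] - A i k.+1 * (w i)^`().[xs i k.+1].
Proof.
rewrite /Mstar Mstar_cell_loc mstar_locE pinteg_deriv /Qi big_ord_recr /=.
by move=> /(canRL (subrK _)) ->; ring.
Qed.

Lemma flux_cell i :
  pinteg (xs i 0%N) (xs i k.+1) (w i)^`() = Qi k xs A i (w i)^`() ->
  \sum_(j < k.+1) Mstar k xs A w i j * (fhat N k beta xs v i j - fhat N k beta xs v i j.+1)
  = beta * (Hstar_cell i + interface_flux i).
Proof.
move=> exact_i; rewrite sum_by_parts (Mstar_last exact_i) /fhat /=.
rewrite (eq_bigr (fun j : 'I_k =>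
    beta * (A i (bump 0 j) * (v i * (w i)^`()).[xs i (bump 0 j)])));
  last by move=> j _; rewrite /Mstar /= hornerM /bump /=; ring.
rewrite -mulr_sumr /Hstar_cell /interface_flux /Qi big_ord_recl big_ord_recr /=.
by rewrite !hornerM /jump_right /jump_left /Mstar /=; ring.
Qed.

Lemma sum_interface_flux : \sum_(i < N) interface_flux i = 0.
Proof.
rewrite /interface_flux sumrB; apply/eqP; rewrite subr_eq0; apply/eqP.
rewrite -(sum_nextc N (fun i => vleft N k xs v i * (w i).[xs i 0%N])).
by apply: eq_bigr => i _; rewrite /vleft prevcK.
Qed.

Lemma flux_term_Mstar :
  (forall i, (i < N)%N ->
     pinteg (xs i 0%N) (xs i k.+1) (w i)^`() = Qi k xs A i (w i)^`()) ->
  flux_term N k beta xs v (Mstar k xs A w) = Hstar N k beta xs A v w.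
Proof.
move=> exact_w; rewrite /flux_term.
rewrite (eq_bigr _ (fun (i : 'I_N) _ => flux_cell (exact_w i (ltn_ord i)))).
by rewrite -mulr_sumr big_split /= sum_interface_flux addr0 /Hstar sumrB big_split.
Qed.

End Flux.

Section TestFunctions.
Variables (R : realType) (N k : nat) (xs ws1 ws2 : nat -> nat -> R).
Hypothesis ws12 : forall i j, (i < N)%N -> (j <= k)%N -> ws1 i j = ws2 i j.

Lemma pairStar_eq f : pairStar N k xs f ws1 = pairStar N k xs f ws2.
Proof. by apply: eq_bigr => i _; apply: eq_bigr => j _; rewrite ws12 // -ltnS. Qed.

Lemma flux_term_eq beta v : flux_term N k beta xs v ws1 = flux_term N k beta xs v ws2.
Proof. by apply: eq_bigr => i _; apply: eq_bigr => j _; rewrite ws12 // -ltnS. Qed.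

End TestFunctions.

Section Mesh.
Variables (R : realType) (N k : nat) (xs A : nat -> nat -> R).
Hypothesis mesh_xs : mesh N k xs.
Hypothesis S_xs : assumptionS N k xs A.

Lemma mesh_cell_lt i : (i < N)%N -> xs i 0%N < xs i k.+1.
Proof.
move: mesh_xs => [_ [inc _]] iN.
suff : forall j, (j <= k)%N -> xs i 0%N < xs i j.+1 by apply.
elim=> [|j IH] jk; first exact: inc.
exact: lt_trans (IH (ltnW jk)) (inc _ _ iN jk).
Qed.

Lemma quad_err_exact i (p : {poly R}) :
  (i < N)%N -> (size p <= 2 * k)%N -> quad_err k xs A i p = 0.
Proof.
move: S_xs => [_ hS] iN sp.
by have := (hS i iN).1 p sp; rewrite integ_poly ?mesh_cell_lt.
Qed.

Lemma flux_term_Mstar_Hstar beta v w : inVk N k w ->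
  flux_term N k beta xs v (Mstar k xs A w) = Hstar N k beta xs A v w.
Proof.
move: S_xs => [k1 _] hw; apply: flux_term_Mstar => i iN.
apply/eqP; rewrite -subr_eq0; apply/eqP; apply: quad_err_exact => //.
by rewrite (leq_trans (size_deriv_leq (hw i iN))) // leq_pmull.
Qed.

Lemma Mstar_onto ws : exists2 w, inVk N k w &
  forall i j, (i < N)%N -> (j <= k)%N -> Mstar k xs A w i j = ws i j.
Proof.
move: S_xs (mesh_cell_lt) (quad_err_exact) => [k1 hS] hab hE.
have [K eK] : exists K, k = K.+1 by exists k.-1; rewrite prednK.
rewrite eK in hS hab hE *.
exists (fun i => mstar_preimage K.+1 xs A i (ws i)) => [i _|i j iN jk].
  exact: size_mstar_preimage.
rewrite /Mstar Mstar_cell_loc mstar_preimageK //.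
exact: mstar_loc_inj (hab i iN) (fun p => hE i p iN) (hS i iN).2.
Qed.

End Mesh.

Theorem theorem3p12 (R : realType) (N k : nat) (xs A : nat -> nat -> R)
  (beta tau : R) (s : nat) (c d : nat -> nat -> R)
  (g : nat -> R -> R) (u : nat -> nat -> {poly R}) :
  mesh N k xs ->
  assumptionS N k xs A ->
  0 < beta ->
  0 < tau ->
  (forall l, (l < s)%N -> \sum_(kap < l.+1) c l kap = 1) ->
  (forall kap, (kap < s)%N -> inL2 (a_of xs) (b_of N k xs) (g kap)) ->
  (forall kap, (kap <= s)%N -> inVk N k (u kap)) ->
  (forall l, (l < s)%N -> forall ws : nat -> nat -> R,
     l2Vk N k xs (u l.+1) ws =
     \sum_(kap < l.+1)
        (c l kap * l2Vk N k xs (u kap) ws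
         + tau * d l kap * (flux_term N k beta xs (u kap) ws
                            + l2g N k xs (g kap) ws)))
  <->
  (forall l, (l < s)%N -> forall w : nat -> {poly R}, inVk N k w ->
     ipStar N k xs A (u l.+1) w =
     \sum_(kap < l.+1)
        (c l kap * ipStar N k xs A (u kap) w
         + tau * d l kap * (Hstar N k beta xs A (u kap) w
                            + l2g N k xs (g kap) (Mstar k xs A w)))).
Proof.
move=> hm hS _ _ _ _ _; split=> H l ls.
  move=> w hw; rewrite /ipStar H //; apply: eq_bigr => kap _.
  by rewrite flux_term_Mstar_Hstar.
move=> ws; have [w hw Mw] := Mstar_onto hm hS ws.
have ws_Mw i j : (i < N)%N -> (j <= k)%N -> ws i j = Mstar k xs A w i j.
  by move=> iN jk; rewrite Mw.
have l2Vk_ws v : l2Vk N k xs v ws = ipStar N k xs A v w.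
  by rewrite /ipStar /l2Vk (pairStar_eq xs ws_Mw).
rewrite l2Vk_ws H //; apply: eq_bigr => kap _.
rewrite l2Vk_ws (flux_term_eq xs ws_Mw) flux_term_Mstar_Hstar //.
by rewrite /l2g (pairStar_eq xs ws_Mw).
Qed.
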